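(* Let $\mathcal{T}=(V,E,L)$ be a trellis of length $n$ with labels in $\mathbb{Q}[\Sigma]$, and let $v\neq v'$ be two vertices lying in the same layer $V_j$ with $1\le j\le n-1$ that are mergeable, i.e. $$\mathcal{P}(v)\mathcal{F}(v)+\mathcal{P}(v')\mathcal{F}(v')=\mathcal{P}(v)\mathcal{F}(v')+\mathcal{P}(v')\mathcal{F}(v)\quad\text{in }\mathbb{Q}[\Sigma^+].$$ Let $\mathcal{T}^*=(V^*,E^*,L^* )$ be the trellis obtained by merging $v$ and $v'$. Then $\mathcal{C}(\mathcal{T}^* )=\mathcal{C}(\mathcal{T})$.
   Context: $\Sigma$ is a finite alphabet, $\Sigma^+$ is the semigroup of nonempty finite strings over $\Sigma$ under concatenation, and $\mathbb{Q}[\Sigma^+]$ is its semigroup algebra over $\mathbb{Q}$: finite formal sums $\sum a_{\boldsymbol\sigma}\boldsymbol\sigma$ with $a_{\boldsymbol\sigma}\in\mathbb{Q}$, with multiplication given by concatenation extended bilinearly. $\mathbb{Q}[\Sigma]\subseteq\mathbb{Q}[\Sigma^+]$ denotes the formal $\mathbb{Q}$-linear combinations of single symbols. A trellis $\mathcal{T}=(V,E,L)$ of length $n$ is a directed graph whose vertex set is partitioned as $V=V_0\cup\dots\cup V_n$, with $V_0=\{\mathrm{root}\}$, $V_n=\{\mathrm{toor}\}$, every edge going from some $V_{j-1}$ to $V_j$ ($j\in[n]$), together with an edge-labelling $L:E\to\mathbb{Q}[\Sigma]$; extend $L$ to $V\times V$ by $L(u,w)=0$ if $(u,w)\notin E$.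 The label of a path is the product (in $\mathbb{Q}[\Sigma^+]$) of its edge labels in order. $\mathcal{C}(\mathcal{T})\in\mathbb{Q}[\Sigma^+]$ is the sum of the labels of all root-to-toor paths (this encodes the multiset of path label strings). For a vertex $w$, the past $\mathcal{P}(w)$ is the sum of labels of all paths from the root to $w$ and the future $\mathcal{F}(w)$ is the sum of labels of all paths from $w$ to the toor. Merging $v,v'\in V_j$: set $V^*=(V\setminus\{v,v'\})\cup\{v^*\}$ with $v^*\in V^*_j$; keep every edge $(w,w')$ of $E$ with $w,w'\notin\{v,v'\}$ with the same label; for every $w\in V_{j-1}$ put $L^*(w,v^* )=L(w,v)+L(w,v')$; for every $w\in V_{j+1}$ put $L^*(v^*,w)=\tfrac12\big(L(v,w)+L(v',w)\big)$ (edges with label $0$ are regarded as absent). *)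

From mathcomp Require Import all_boot all_order all_algebra.
Set Implicit Arguments. Unset Strict Implicit. Unset Printing Implicit Defensive.
Import Order.TTheory GRing.Theory Num.Theory.
Local Open Scope ring_scope.

Section Trellis.
Variable Sigma : finType.

(* Elements of Q[Sigma^+] are represented by their coefficient functions on
   words (seq Sigma); the coefficient of the empty word is irrelevant (always 0
   for everything built here). *)
Definition ser := seq Sigma -> rat.

Definition szero : ser := fun _ => 0.
Definition sadd (a b : ser) : ser := fun w => a w + b w.
Definition smul (a b : ser) : ser :=
  fun w => \sum_(1 <= i < size w) a (take i w) * b (drop i w).

Definition emb (c : Sigma -> rat) : ser :=
  fun w => if w is [:: x] then c x else 0.

Variable V : finType.

(* A trellis on an ambient finite type V: vertex set tV, layer map, root,
   toor and tr_edge labels (label 0 = no tr_edge). *)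
Record trellis := Trellis {
  tV : {set V};
  lay : V -> nat;
  troot : V;
  ttoor : V;
  tlab : V -> V -> Sigma -> rat }.

Definition tr_edge (T : trellis) (x y : V) : bool := [exists s, tlab T x y s != 0].

Definition is_trellis (n : nat) (T : trellis) : Prop :=
  [/\ troot T \in tV T, ttoor T \in tV T, lay T (troot T) = 0%N,
      lay T (ttoor T) = n &
   [/\ forall x, x \in tV T -> (lay T x <= n)%N,
       forall x, x \in tV T -> lay T x = 0%N -> x = troot T,
       forall x, x \in tV T -> lay T x = n -> x = ttoor T &
       forall x y, tr_edge T x y ->
         [/\ x \in tV T, y \in tV T & lay T y = (lay T x).+1]]].

Fixpoint plab (L : V -> V -> Sigma -> rat) (u : V) (s : seq V) : ser :=
  match s with
  | [::] => szero
  | [:: w] => emb (L u w)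
  | w :: s' => smul (emb (L u w)) (plab L w s')
  end.

Definition is_path (T : trellis) (u : V) (s : seq V) : bool :=
  all (fun x => x \in tV T) (u :: s) && path (tr_edge T) u s.

(* sum of the labels of all paths from u to w with k >= 1 edges *)
Definition psum (T : trellis) (k : nat) (u w : V) : ser :=
  fun x => \sum_(t : (k.-1).-tuple V | is_path T u (rcons t w))
             plab (tlab T) u (rcons t w) x.

Definition tr_past (T : trellis) (w : V) : ser := psum T (lay T w) (troot T) w.
Definition tr_future (n : nat) (T : trellis) (w : V) : ser :=
  psum T (n - lay T w) w (ttoor T).
Definition tr_code (n : nat) (T : trellis) : ser := psum T n (troot T) (ttoor T).

(* merging v and v': v' is removed, and v plays the role of the new vertex v* *)
Definition merge_lab (T : trellis) (v v' : V) : V -> V -> Sigma -> rat :=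
  fun x y s =>
    if (x == v') || (y == v') then 0
    else if x == v then 2^-1 * (tlab T v y s + tlab T v' y s)
    else if y == v then tlab T x v s + tlab T x v' s
    else tlab T x y s.

Definition tr_merge (T : trellis) (v v' : V) : trellis :=
  Trellis (tV T :\ v') (lay T) (troot T) (ttoor T) (merge_lab T v v').

End Trellis.

From mathcomp Require Import all_boot all_order all_algebra.
From mathcomp Require Import zify lra.
Import Order.TTheory GRing.Theory Num.Theory.
Local Open Scope ring_scope.

(* For a layered labelling, [R] factors through any intermediate layer:
   the code is  \sum_(x in layer j) P(x) F(x),  with P/F past and future.
   Merging v, v' in layer j does not touch the labels strictly before or
   after layer j, so P and F are unchanged at every other vertex x of
   layer j; at the merged vertex the past becomes P(v) + P(v'), the future
   becomes (F(v) + F(v'))/2, and v' contributes nothing.  Expanding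
   (P(v) + P(v'))(F(v) + F(v'))/2 and using the mergeability identity gives
   back P(v)F(v) + P(v')F(v'), i.e. the original code. *)

Lemma bigD2 {I : finType} {P : pred I} {A : nmodType} {F : I -> A} {i i'} : i != i' -> P i -> P i' ->
  \sum_(x | P x) F x = F i + F i' + \sum_(x | P x && (x != i) && (x != i')) F x.
Proof.
move=> Hii Hi Hi'; rewrite (bigD1 i) //= (bigD1 i') /= ?Hi' 1?eq_sym // addrA.
by congr (_ + _); apply: eq_bigl => x; rewrite andbAC.
Qed.

Section Trellis.
Set Implicit Arguments.
Variable Sigma : finType.
Notation ser := (ser Sigma).
Notation szero := (@szero Sigma).

Definition sscale (c : rat) (a : ser) : ser := fun w => c * a w.

Lemma smul_ext (a a' b b' : ser) : a =1 a' -> b =1 b' -> smul a b =1 smul a' b'.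
Proof. by move=> Ha Hb w; apply: eq_bigr => i _; rewrite Ha Hb. Qed.

Lemma smul0r (b : ser) : smul szero b =1 szero.
Proof. by move=> w; rewrite /smul big1 // => i _; rewrite mul0r. Qed.

Lemma smulr0 (b : ser) : smul b szero =1 szero.
Proof. by move=> w; rewrite /smul big1 // => i _; rewrite mulr0. Qed.

Lemma smulDl (a b c : ser) w : smul (sadd a b) c w = smul a c w + smul b c w.
Proof. by rewrite /smul -big_split; apply: eq_bigr => i _; rewrite mulrDl. Qed.

Lemma smulDr (a b c : ser) w : smul c (sadd a b) w = smul c a w + smul c b w.
Proof. by rewrite /smul -big_split; apply: eq_bigr => i _; rewrite mulrDr. Qed.

Lemma smulZl k (a c : ser) w : smul (sscale k a) c w = k * smul a c w.
Proof. by rewrite /smul mulr_sumr; apply: eq_bigr => i _; rewrite mulrA. Qed.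

Lemma smulZr k (a c : ser) w : smul c (sscale k a) w = k * smul c a w.
Proof. by rewrite /smul mulr_sumr; apply: eq_bigr => i _; rewrite mulrCA. Qed.

Lemma smul_suml (I : finType) (F : I -> ser) (b : ser) w :
  smul (fun s => \sum_i F i s) b w = \sum_i smul (F i) b w.
Proof. by rewrite /smul exchange_big; apply: eq_bigr => i _; rewrite mulr_suml. Qed.

Lemma smul_sumr (I : finType) (F : I -> ser) (b : ser) w :
  smul b (fun s => \sum_i F i s) w = \sum_i smul b (F i) w.
Proof. by rewrite /smul exchange_big; apply: eq_bigr => i _; rewrite mulr_sumr. Qed.

Lemma emb0 {c : Sigma -> rat} : (forall z, c z = 0) -> emb c =1 szero.
Proof. by move=> H [|x [|y w]] //=. Qed.

Lemma emb_ext (c d : Sigma -> rat) : c =1 d -> emb c =1 emb d.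
Proof. by move=> H [|x [|y w]] //=. Qed.

Lemma emb_add (c d : Sigma -> rat) : emb (fun z => c z + d z) =1 sadd (emb c) (emb d).
Proof. by case=> [|x [|y w]] //=; rewrite /sadd addr0. Qed.

Lemma emb_scale k (c : Sigma -> rat) : emb (fun z => k * c z) =1 sscale k (emb c).
Proof. by case=> [|x [|y w]] //=; rewrite /sscale mulr0. Qed.

Lemma smul_emb_cons c (a : ser) x w :
  smul (emb c) a (x :: w) = if w is [::] then 0 else c x * a w.
Proof.
case: w => [|y w]; first by rewrite /smul big_geq.
rewrite /smul big_ltn //= big_nat_cond big1 ?addr0 ?drop0 // => i.
by case: i => [|[|i]] //= _; rewrite mul0r.
Qed.

Lemma smul_embA c (a b : ser) : smul (emb c) (smul a b) =1 smul (smul (emb c) a) b.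
Proof.
case=> [|x w]; first by rewrite /smul !big_geq.
rewrite smul_emb_cons; case: w => [|y w]; first by rewrite /smul big_geq.
rewrite {1 2}/smul /= [RHS]big_ltn // smul_emb_cons mul0r add0r [RHS]big_add1.
rewrite big_distrr /= big_nat_cond [RHS]big_nat_cond.
apply: eq_bigr => i /andP [/andP [Hi _] _].
by rewrite smul_emb_cons; case: i Hi => [|i] //= _; rewrite mulrA.
Qed.

Variable V : finType.
Implicit Types (L M : V -> V -> Sigma -> rat) (lay : V -> nat).

(* [R L k u w]: the sum of the labels of all vertex sequences u, x_1, ..., x_k, w
   (paths with k+1 edges), unfolded along the first edge. *)
Fixpoint R L (k : nat) (u w : V) : ser :=
  match k with
  | 0 => emb (L u w)
  | k'.+1 => fun s => \sum_x smul (emb (L u x)) (R L k' x w) s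
  end.

Lemma R_split L a b u w :
  R L (a + b).+1 u w =1 fun s => \sum_x smul (R L a u x) (R L b x w) s.
Proof.
elim: a u => [|a IH] u s //=.
under eq_bigr => x _ do rewrite (smul_ext (frefl _) (IH x)) smul_sumr.
rewrite exchange_big /=; apply: eq_bigr => y _.
by rewrite smul_suml; apply: eq_bigr => x _; rewrite smul_embA.
Qed.

Definition layered lay L := forall a b z, L a b z != 0 -> lay b = (lay a).+1.

Lemma layered_off lay L {a b} :
  layered lay L -> lay b != (lay a).+1 -> forall z, L a b z = 0.
Proof. by move=> HL Hb z; apply/eqP; apply: contraNT Hb => /HL ->. Qed.

Lemma R_off_layer lay L {k u w} : layered lay L ->
  (lay w != lay u + k.+1)%N -> R L k u w =1 szero.
Proof.
move=> HL; elim: k u w => [|k IH] u w Hw /=.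
  by apply: emb0; apply: (layered_off HL); rewrite addn1 in Hw.
move=> s; rewrite big1 // => x _.
have [Hx|Hx] := eqVneq (lay x) (lay u).+1.
  by rewrite (smul_ext (frefl _) (IH x w _)) ?smulr0 // Hx addSnnS.
by rewrite (smul_ext (emb0 (layered_off HL Hx)) (frefl _)) smul0r.
Qed.

Lemma R_dead_source L k u w : (forall y z, L u y z = 0) -> R L k u w =1 szero.
Proof.
case: k => [|k] H0 /=; first exact: emb0.
by move=> s; rewrite big1 // => x _; rewrite (smul_ext (emb0 (H0 x)) (frefl _)) smul0r.
Qed.

Lemma R_split_layer lay L : layered lay L -> forall a b u w s,
  R L (a + b).+1 u w s =
  \sum_(x | (lay x == lay u + a.+1)%N) smul (R L a u x) (R L b x w) s.
Proof.
move=> HL a b u w s; rewrite R_split [RHS]big_mkcond; apply: eq_bigr => x _.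
case: eqP => [//|/eqP Hx].
by rewrite (smul_ext (R_off_layer HL Hx) (frefl _)) smul0r.
Qed.

(* [M] and [L] agree on every edge used by a path from u to w: edges between
   consecutive layers, starting at u or after its layer, and ending at w or
   before its layer. *)
Definition agree_between lay L M u w := forall a b,
  lay b = (lay a).+1 -> (lay u < lay a)%N \/ a = u ->
  (lay b < lay w)%N \/ b = w -> M a b =1 L a b.

Lemma R_agree lay L M {k u w} : layered lay L -> layered lay M ->
  agree_between lay L M u w -> R M k u w =1 R L k u w.
Proof.
move=> HL HM; elim: k u => [|k IH] u Hag /=.
  have [Hw|Hw] := eqVneq (lay w) (lay u).+1; first by apply/emb_ext/Hag => //; right.
  by move=> s; rewrite (emb0 (layered_off HL Hw)) (emb0 (layered_off HM Hw)).
move=> s; apply: eq_bigr => x _.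
have [Hx|Hx] := eqVneq (lay x) (lay u).+1; last first.
  by rewrite !(smul_ext (emb0 (layered_off _ Hx)) (frefl _)) ?smul0r.
have [Hxw|Hwx] := ltnP (lay x) (lay w); last first.
  have Hne : (lay w != lay x + k.+1)%N by apply/eqP; lia.
  by rewrite !(smul_ext (frefl _) (R_off_layer _ Hne)) ?smulr0.
apply: smul_ext; first by apply/emb_ext/Hag => //; [right | left].
apply: IH => a0 b0 Hab Ha0 Hb0; apply: Hag => //; left.
by case: Ha0 => [|->]; lia.
Qed.

Lemma sum_tuple_cons k (F : k.+1.-tuple V -> rat) :
  \sum_t F t = \sum_x \sum_(t : k.-tuple V) F [tuple of x :: t].
Proof.
rewrite pair_big /= (reindex (fun p : V * k.-tuple V => [tuple of p.1 :: p.2])) //=.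
exists (fun t : k.+1.-tuple V => (thead t, [tuple of behead t])).
  by move=> [x t] _ /=; rewrite theadE; congr pair; apply: val_inj.
by move=> t _; rewrite [RHS]tuple_eta.
Qed.

Lemma sum_plab_R L k u w s :
  \sum_(t : k.-tuple V) plab L u (rcons t w) s = R L k u w s.
Proof.
elim: k u s => [|k IH] u s.
  rewrite (eq_bigl (pred1 [tuple])) ?big_pred1_eq // => t.
  by apply/esym/eqP; exact: tuple0.
rewrite sum_tuple_cons; apply: eq_bigr => x _.
have plab_cons t : plab L u (x :: rcons t w) = smul (emb (L u x)) (plab L x (rcons t w)).
  by case: t.
by under eq_bigr => t _ do rewrite plab_cons; rewrite -smul_sumr; apply: smul_ext.
Qed.

Section PathSums.
Variable T : trellis Sigma V.
Hypothesis label_inside : forall x y, y \notin tV T -> forall z, tlab T x y z = 0.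

(* A vertex sequence that is not a path of T has label 0: some edge along it
   is either missing or leads outside the vertex set. *)
Lemma plab_nonpath {s u} : u \in tV T -> ~~ is_path T u s -> plab (tlab T) u s =1 szero.
Proof.
elim: s u => [|w s IH] u Hu Hp //.
have head0 : (forall z, tlab T u w z = 0) -> plab (tlab T) u (w :: s) =1 szero.
  move=> H0; case: s {IH Hp} => [|y s] /=; first exact: emb0.
  by move=> x; rewrite (smul_ext (emb0 H0) (frefl _)) smul0r.
have [Hw|/(label_inside u)] := boolP (w \in tV T); last exact: head0.
have [He|He] := boolP (tr_edge T u w); last first.
  apply: head0 => z; apply/eqP; move: He.
  by rewrite /tr_edge negb_exists => /forallP /(_ z); rewrite negbK.
have Hp' : ~~ is_path T w s.
  by apply: contra Hp; rewrite /is_path /= Hu Hw He => /andP [-> ->].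
clear head0; case: s IH Hp Hp' => [|y s] IH _ Hp'; first by rewrite /is_path /= Hw in Hp'.
by move=> x; rewrite [plab _ _ _]/= (smul_ext (frefl _) (IH w Hw Hp')) smulr0.
Qed.

Lemma psum_R k u w : u \in tV T -> psum T k.+1 u w =1 R (tlab T) k u w.
Proof.
move=> Hu s; rewrite /psum /= -sum_plab_R big_mkcond /=; apply: eq_bigr => t _.
by case: ifP => // /negbT Hp; rewrite (plab_nonpath Hu Hp).
Qed.

Lemma smul_psum_R k m u1 w1 u2 w2 : u1 \in tV T -> u2 \in tV T ->
  smul (psum T k.+1 u1 w1) (psum T m.+1 u2 w2) =1
  smul (R (tlab T) k u1 w1) (R (tlab T) m u2 w2).
Proof. by move=> Hu1 Hu2; apply: smul_ext; apply: psum_R. Qed.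
End PathSums.

Lemma trellis_layered n (T : trellis Sigma V) :
  is_trellis n T -> layered (lay T) (tlab T).
Proof.
case=> _ _ _ _ [_ _ _ He] a b z Hz.
by have /He [] : tr_edge T a b by apply/existsP; exists z.
Qed.

Lemma trellis_label_inside n (T : trellis Sigma V) :
  is_trellis n T -> forall x y, y \notin tV T -> forall z, tlab T x y z = 0.
Proof.
case=> _ _ _ _ [_ _ _ He] x y Hy z; apply/eqP; apply: contraNT Hy => Hz.
by have /He [] : tr_edge T x y by apply/existsP; exists z.
Qed.

Section Merge.
Variables (T : trellis Sigma V) (v v' : V).
Hypotheses (HL : layered (lay T) (tlab T)) (Hvv : v != v')
  (Hlv : lay T v' = lay T v).
Notation L := (tlab T).
Notation M := (merge_lab T v v').

Lemma no_edge_to_layer {x} z : lay T x = lay T v -> L x v z = 0 /\ L x v' z = 0.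
Proof. by move=> Hx; split; apply: (layered_off HL); rewrite ?Hlv Hx; apply/eqP; lia. Qed.

Lemma merge_lab_in y z : M y v z = L y v z + L y v' z.
Proof.
rewrite /merge_lab (negbTE Hvv) orbF.
have [->|Hy] := eqVneq y v'.
  by have [-> ->] := no_edge_to_layer z Hlv; rewrite addr0.
have [->|_] := eqVneq y v; last by rewrite eqxx.
have [-> ->] := no_edge_to_layer z (erefl (lay T v)).
by have [-> _] := no_edge_to_layer z Hlv; rewrite !addr0 mulr0.
Qed.

Lemma merge_lab_out y z : M v y z = 2^-1 * (L v y z + L v' y z).
Proof.
rewrite /merge_lab (negbTE Hvv) /= eqxx; have [->|//] := eqVneq y v'.
have [_ ->] := no_edge_to_layer z (erefl (lay T v)).
by have [_ ->] := no_edge_to_layer z Hlv; rewrite addr0 mulr0.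
Qed.

Lemma merge_lab_v' y z : M v' y z = 0.
Proof. by rewrite /merge_lab eqxx. Qed.

Lemma merge_lab_other x y : x != v -> x != v' -> y != v -> y != v' -> M x y =1 L x y.
Proof. by move=> ? ? ? ? z; rewrite /merge_lab !ifN // negb_or; apply/andP. Qed.

Lemma merge_layered : layered (lay T) M.
Proof.
move=> a b z; have [->|Ha'] := eqVneq a v'; first by rewrite merge_lab_v' eqxx.
have [->|Ha] := eqVneq a v.
  rewrite merge_lab_out => Hz; apply/eqP; apply: contraNT Hz => Hb.
  by rewrite (layered_off HL Hb) (layered_off HL (b := b) (a := v')) ?Hlv // addr0 mulr0.
have [->|Hb] := eqVneq b v.
  rewrite merge_lab_in => Hz; apply/eqP; apply: contraNT Hz => Hb.
  by rewrite (layered_off HL Hb) (layered_off HL (b := v')) ?Hlv // addr0.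
have [->|Hb'] := eqVneq b v'; first by rewrite /merge_lab eqxx orbT eqxx.
by rewrite merge_lab_other //; apply: HL.
Qed.

Lemma merge_label_inside : v \in tV T ->
  (forall x y, y \notin tV T -> forall z, L x y z = 0) ->
  forall x y, y \notin tV (tr_merge T v v') -> forall z, M x y z = 0.
Proof.
move=> Hv Hin x y; rewrite !inE negb_and negbK => /orP [/eqP -> z|Hy z].
  by rewrite /merge_lab eqxx orbT.
have Hyv : y != v by apply: contraNneq Hy => ->.
have H0 x' : L x' y z = 0 by apply: Hin.
by rewrite /merge_lab (negbTE Hyv) !H0 addr0 mulr0 !if_same.
Qed.

Lemma off_layer_other x : lay T x != lay T v -> x != v /\ x != v'.
Proof. by move=> Hx; split; apply: contraNneq Hx => ->; rewrite ?Hlv. Qed.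

Lemma merge_agree u w : u != v -> u != v' -> w != v -> w != v' ->
  (lay T w <= lay T v \/ lay T v <= lay T u)%N ->
  agree_between (lay T) L M u w.
Proof.
move=> Huv Huv' Hwv Hwv' Hw a b Hab Ha Hb.
have Hua : (lay T u <= lay T a)%N by case: Ha => [/ltnW|->].
have Hbw : (lay T b <= lay T w)%N by case: Hb => [/ltnW|->].
have [Hav Hav'] : a != v /\ a != v'.
  by case: Ha => [Ha|->] //; apply: off_layer_other; apply/eqP; lia.
have [Hbv Hbv'] : b != v /\ b != v'.
  by case: Hb => [Hb|->] //; apply: off_layer_other; apply/eqP; lia.
exact: merge_lab_other.
Qed.

(* Past and future of the merged trellis, for paths from r (a+1 layers above
   v) to t (b+1 layers below v). *)
Variables (r t : V) (a b : nat).
Hypotheses (Hr : lay T v = (lay T r + a).+1) (Ht : lay T t = (lay T v + b).+1).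
Notation P x := (R L a r x).
Notation F x := (R L b x t).

Lemma r_other : r != v /\ r != v'.
Proof. by apply: off_layer_other; apply/eqP; lia. Qed.

Lemma t_other : t != v /\ t != v'.
Proof. by apply: off_layer_other; apply/eqP; lia. Qed.

Lemma merge_past_other x : x != v -> x != v' -> lay T x = lay T v -> R M a r x =1 P x.
Proof.
have [? ?] := r_other; move=> ? ? Hx.
by apply: (R_agree HL merge_layered); apply: merge_agree => //; left; rewrite Hx.
Qed.

Lemma merge_future_other x : x != v -> x != v' -> lay T x = lay T v -> R M b x t =1 F x.
Proof.
have [? ?] := t_other; move=> ? ? Hx.
by apply: (R_agree HL merge_layered); apply: merge_agree => //; right; rewrite Hx.
Qed.

Lemma merge_past_v : R M a r v =1 sadd (P v) (P v').
Proof.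
case: a Hr => [|a'] Hra.
  by move=> s; rewrite /= (emb_ext (merge_lab_in r)) emb_add.
move=> s; rewrite -(addn0 a') /sadd (R_split_layer merge_layered).
rewrite !(R_split_layer HL) -big_split /=; apply: eq_bigr => y /eqP Hy.
have [Hyv Hyv'] : y != v /\ y != v' by apply: off_layer_other; apply/eqP; lia.
have Hpast : R M a' r y =1 R L a' r y.
  apply: (R_agree HL merge_layered); have [? ?] := r_other.
  by apply: merge_agree => //; left; lia.
rewrite (smul_ext Hpast (emb_ext (merge_lab_in y))).
by rewrite (smul_ext (frefl _) (emb_add _ _)) smulDr.
Qed.

Lemma merge_future_v : R M b v t =1 sscale 2^-1 (sadd (F v) (F v')).
Proof.
case: b Ht => [|b'] Htb.
  by move=> s; rewrite /= (emb_ext (merge_lab_out t)) emb_scale /sscale emb_add.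
move=> s; rewrite -(add0n b') /sscale /sadd (R_split_layer merge_layered).
rewrite !(R_split_layer HL) Hlv -big_split mulr_sumr /=; apply: eq_bigr => y /eqP Hy.
have [Hyv Hyv'] : y != v /\ y != v' by apply: off_layer_other; apply/eqP; lia.
have Hfuture : R M b' y t =1 R L b' y t.
  apply: (R_agree HL merge_layered); have [? ?] := t_other.
  by apply: merge_agree => //; right; lia.
rewrite (smul_ext (emb_ext (merge_lab_out y)) Hfuture).
by rewrite (smul_ext (emb_scale _ _) (frefl _)) smulZl (smul_ext (emb_add _ _) (frefl _)) smulDl.
Qed.

Lemma merge_future_v' : R M b v' t =1 szero.
Proof. by apply: R_dead_source => y z; apply: merge_lab_v'. Qed.

Lemma merge_code :
  sadd (smul (P v) (F v)) (smul (P v') (F v')) =1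
  sadd (smul (P v) (F v')) (smul (P v') (F v)) ->
  R M (a + b).+1 r t =1 R L (a + b).+1 r t.
Proof.
move=> Hmerge s; rewrite (R_split_layer merge_layered) (R_split_layer HL) addnS -Hr.
have Hv'v : lay T v' == lay T v by rewrite Hlv.
rewrite [LHS](bigD2 Hvv) // [RHS](bigD2 Hvv) //.
have Hrest : \sum_(x | (lay T x == lay T v) && (x != v) && (x != v'))
    smul (R M a r x) (R M b x t) s =
  \sum_(x | (lay T x == lay T v) && (x != v) && (x != v')) smul (P x) (F x) s.
  apply: eq_bigr => x /andP [/andP [/eqP Hx Hxv] Hxv'].
  by apply: smul_ext; [apply: merge_past_other | apply: merge_future_other].
rewrite Hrest (smul_ext (frefl _) merge_future_v') smulr0 addr0.
rewrite (smul_ext merge_past_v merge_future_v) smulZr smulDl !smulDr.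
by move: (Hmerge s); rewrite /sadd; lra.
Qed.
End Merge.
End Trellis.

Theorem proposition1 (Sigma V : finType) (n j : nat) (T : trellis Sigma V)
    (v v' : V) :
  is_trellis n T ->
  v \in tV T -> v' \in tV T -> v != v' ->
  lay T v = j -> lay T v' = j -> (1 <= j <= n.-1)%N ->
  sadd (smul (tr_past T v) (tr_future n T v)) (smul (tr_past T v') (tr_future n T v'))
    =1 sadd (smul (tr_past T v) (tr_future n T v')) (smul (tr_past T v') (tr_future n T v)) ->
  tr_code n (tr_merge T v v') =1 tr_code n T.
Proof.
move=> Htr Hv Hv' Hvv Hlv Hlv' Hj Hmerge.
have HL := trellis_layered Htr; have Hin := trellis_label_inside Htr.
case: Htr => Hr _ Hlr Hlt _.
have Hvv' : lay T v' = lay T v by rewrite Hlv Hlv'.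
have [a [b [Hva Hnab]]] : exists a b, lay T v = a.+1 /\ n = (a + b).+2.
  by exists j.-1, (n - j.-1.+2)%N; lia.
have Hfuture : ((a + b).+2 - a.+1 = b.+1)%N by lia.
have Hr' : troot T \in tV (tr_merge T v v').
  by rewrite !inE Hr andbT; apply/eqP => Er; move: Hlr; rewrite Er Hvv' Hva.
move: Hmerge; rewrite /tr_past /tr_future /tr_code Hvv' Hva Hnab Hfuture => Hmerge s.
rewrite (psum_R _ (merge_label_inside _ _ Hv Hin) _ _ Hr') (psum_R _ Hin _ _ Hr).
apply: (merge_code _ _ _ HL Hvv Hvv') => /=; try lia.
by move=> w; have := Hmerge w; rewrite /sadd !smul_psum_R.
Qed.
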